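(* Let $I\subset\mathbb{K}[x_1,\ldots,x_n]$ be a zero-dimensional ideal of degree $D$ in shape position, with Gröbner basis $G_1$ w.r.t. a term ordering $<_1$, multiplication matrix $T_1$ (assumed nonsingular) and $\mathbf{e}=(1,0,\ldots,0)^t\in\mathbb{K}^D$. Let $\mathbf{w}\in\mathbb{K}^D$, and let $\tilde f_1$ be the minimal polynomial, of degree $d$, of the scalar sequence $(\langle\mathbf{w},T_1^i\mathbf{e}\rangle)_{i=0}^{2D-1}$. Let $\tilde T_1$ be the multiplication matrix of $x_1$ for the ideal $I+\langle\tilde f_1\rangle$ w.r.t. $<_1$, and let $\tilde{\mathbf{e}}=(1,0,\ldots,0)^t\in\mathbb{K}^{d}$ be the coordinate vector of $1$ in $\mathbb{K}[x_1,\ldots,x_n]/(I+\langle\tilde f_1\rangle)$. Then $\tilde f_1$ is also the minimal polynomial of the vector sequence $[\tilde{\mathbf{e}},\tilde T_1\tilde{\mathbf{e}},\tilde T_1^2\tilde{\mathbf{e}},\ldots]$.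
   Context: Variables are ordered $x_1<\cdots<x_n$. For a zero-dimensional ideal $J$ with Gröbner basis w.r.t. $<_1$, let $B=[\epsilon_1,\ldots,\epsilon_m]$ be the canonical basis (standard monomials) of the quotient ring, ordered increasingly by $<_1$, so that $\epsilon_1=1$. The multiplication matrix of $x_i$ is the $m\times m$ matrix whose $j$-th column is the coordinate vector, in $B$, of the normal form of $\epsilon_j x_i$. $I$ is in shape position if its reduced Gröbner basis w.r.t. LEX is $[f_1(x_1),x_2-f_2(x_1),\ldots,x_n-f_n(x_1)]$; then $\deg f_1=D$. The minimal polynomial of a scalar linearly recurring sequence is the monic generator of its ideal of characteristic polynomials. The minimal polynomial of a vector sequence $(A^i\mathbf{v})_{i\ge0}$ is the monic polynomial $p$ of least degree with $p(A)\mathbf{v}=0$. *)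

From HB Require Import structures.
From mathcomp Require Import all_boot all_order all_algebra.
From mathcomp Require Import mpoly.
Set Implicit Arguments. Unset Strict Implicit. Unset Printing Implicit Defensive.
Import Order.TTheory GRing.Theory.
Local Open Scope ring_scope.

Section Defs.
Variables (K : fieldType) (n : nat).
Local Notation M := ('X_{1..n}).
Local Notation P := ({mpoly K[n]}).

Definition is_ideal (I : P -> Prop) : Prop :=
  [/\ I 0,
      (forall p q, I p -> I q -> I (p + q)) &
      (forall p q, I q -> I (p * q))].

Definition ideal_gen (G : seq P) (p : P) : Prop :=
  exists c : 'I_(size G) -> P, p = \sum_(i < size G) c i * G`_i.

Definition term_order (lt : rel M) : Prop :=
  [/\ irreflexive lt, transitive lt,
      (forall a b, a != b -> lt a b || lt b a),
      (forall a b c, lt a b -> lt (a + c)%MM (b + c)%MM) &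
      (forall a, a != 0%MM -> lt 0%MM a)].

Definition is_lm (lt : rel M) (f : P) (m : M) : Prop :=
  m \in msupp f /\ (forall m', m' \in msupp f -> m' != m -> lt m' m).

Definition standard (lt : rel M) (I : P -> Prop) (m : M) : Prop :=
  ~ (exists f, [/\ I f, f != 0 & is_lm lt f m]).

(* B is the canonical basis of K[x]/I: the list of standard monomials,
   sorted increasingly w.r.t. lt.  Its existence (as a finite list)
   expresses zero-dimensionality, and size B is the degree of I. *)
Definition canonical_basis (lt : rel M) (I : P -> Prop) (B : seq M) : Prop :=
  sorted lt B /\ (forall m, m \in B <-> standard lt I m).

(* T is the multiplication matrix of g in K[x]/I w.r.t. the basis B:
   its j-th column is the coordinate vector (in B) of the normal form
   of eps_j * g. *)
Definition mult_matrix (I : P -> Prop) (B : seq M) (g : P)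
    (T : 'M[K]_(size B)) : Prop :=
  forall j : 'I_(size B),
    I ('X_[nth 0%MM B j] * g - \sum_(k < size B) T k j *: 'X_[nth 0%MM B k]).

Definition reduced_groebner (lt : rel M) (I : P -> Prop) (G : seq P) : Prop :=
  [/\ (forall p, I p <-> ideal_gen G p),
      (forall i : 'I_(size G), exists m, is_lm lt G`_i m /\ G`_i@_m = 1),
      (forall f, I f -> f != 0 -> exists (i : 'I_(size G)) m mf,
          [/\ is_lm lt G`_i m, is_lm lt f mf & (m <= mf)%MM]) &
      (forall (i j : 'I_(size G)) m, i != j -> is_lm lt G`_j m ->
          forall t, t \in msupp G`_i -> ~~ (m <= t)%MM)].

End Defs.
Arguments mult_matrix {K n} I B g T.

Definition poly_x1 (K : fieldType) (n : nat) (p : {poly K}) : {mpoly K[n.+1]} :=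
  \sum_(i < size p) p`_i *: 'X_ord0 ^+ i.

(* LEX order with x_1 < x_2 < ... < x_n (variable x_i is index i-1) *)
Definition lexlt (n : nat) : rel 'X_{1..n} :=
  fun a b => [exists k : 'I_n, (a k < b k)%N &&
                               [forall j : 'I_n, (k < j)%N ==> (a j == b j)]].

Definition shape_position (K : fieldType) (n : nat)
    (I : {mpoly K[n.+1]} -> Prop) : Prop :=
  exists f : 'I_n.+1 -> {poly K},
    reduced_groebner (@lexlt n.+1) I
      [seq (if i == ord0 then poly_x1 n (f i)
            else 'X_i - poly_x1 n (f i)) | i <- enum 'I_n.+1].

Definition ideal_add1 (K : fieldType) (n : nat) (I : {mpoly K[n]} -> Prop)
    (g : {mpoly K[n]}) : {mpoly K[n]} -> Prop :=
  fun p => exists a b, I a /\ p = a + b * g.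

Definition e1 (K : fieldType) (m : nat) : 'cV[K]_m :=
  \col_(i < m) (if (i == 0 :> nat) then 1 else 0).

Definition char_poly_seq (K : fieldType) (s : nat -> K) (q : {poly K}) : Prop :=
  forall i, \sum_(k < size q) q`_k * s (i + k)%N = 0.

Definition min_poly_seq (K : fieldType) (s : nat -> K) (p : {poly K}) : Prop :=
  p \is monic /\ (forall q, char_poly_seq s q <-> p %| q).

Definition poly_mx (K : fieldType) (m : nat) (A : 'M[K]_m) (p : {poly K}) : 'M[K]_m :=
  \sum_(k < size p) p`_k *: A ^+ k.

Definition min_poly_vec (K : fieldType) (m : nat) (A : 'M[K]_m) (v : 'cV[K]_m)
    (p : {poly K}) : Prop :=
  [/\ p \is monic, poly_mx A p *m v = 0 &
      (forall q, q \is monic -> poly_mx A q *m v = 0 -> (size p <= size q)%N)].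

(* For a zero-dimensional ideal J with canonical basis B and multiplication
   matrix T of x_1, the normal form of q(x_1) has coordinate vector q(T) e, so
   q(x_1) lies in J exactly when q(T) e = 0.  For J = I such a q annihilates the
   sequence <w, T_1^i e>, hence is a multiple of ft.  Shape position makes every
   polynomial congruent modulo I to a polynomial in x_1; therefore the
   polynomials in x_1 lying in I + <ft(x_1)> are exactly the multiples of ft,
   which is the minimality statement for (T2^i e).  Reducing modulo ft further
   shows that e, T2 e, ..., T2^(d-1) e span the quotient, and minimality makes
   them independent, so the quotient has dimension d = deg ft. *)

From HB Require Import structures.
From mathcomp Require Import all_boot all_order all_algebra.
From mathcomp Require Import mpoly.
From Stdlib Require Import Classical.
Set Implicit Arguments. Unset Strict Implicit. Unset Printing Implicit Defensive.
Import GRing.Theory.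
Local Open Scope ring_scope.

Section Ideal.
Variables (K : fieldType) (n : nat) (I : {mpoly K[n]} -> Prop).
Hypothesis idealI : is_ideal I.

Lemma ideal0 : I 0. Proof. by case: idealI. Qed.
Lemma idealD p q : I p -> I q -> I (p + q). Proof. by case: idealI => _ + _; apply. Qed.
Lemma idealMl p q : I q -> I (p * q). Proof. by case: idealI => _ _; apply. Qed.
Lemma idealMr p q : I p -> I (p * q). Proof. by rewrite mulrC; apply: idealMl. Qed.
Lemma idealZ (a : K) p : I p -> I (a *: p).
Proof. by rewrite -mul_mpolyC; apply: idealMl. Qed.
Lemma idealB p q : I p -> I q -> I (p - q).
Proof. by move=> Ip Iq; apply: idealD => //; rewrite -scaleN1r; apply: idealZ. Qed.

Lemma ideal_sum (J : Type) (r : seq J) (P : pred J) (F : J -> {mpoly K[n]}) :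
  (forall j, P j -> I (F j)) -> I (\sum_(j <- r | P j) F j).
Proof. by move=> IF; apply: big_ind => //; [exact: ideal0 | exact: idealD]. Qed.

End Ideal.

Lemma horner_alg_coef (R : nzSemiRingType) (A : semiAlgType R) (a : A)
    (p : {poly R}) :
  horner_alg a p = \sum_(i < size p) p`_i *: a ^+ i.
Proof.
rewrite /horner_alg /horner_morph (horner_coef_wide _ (size_poly _ _)).
by apply: eq_bigr => i _; rewrite coef_map /= mulr_algl.
Qed.

Lemma poly_x1E (K : fieldType) (n : nat) (p : {poly K}) :
  poly_x1 n p = horner_alg ('X_ord0 : {mpoly K[n.+1]}) p.
Proof. by rewrite horner_alg_coef. Qed.

Lemma exists_lt_max (T : eqType) (lt : rel T) :
    transitive lt -> (forall a b, a != b -> lt a b || lt b a) ->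
  forall s : seq T, s != [::] ->
  exists2 x, x \in s & forall y, y \in s -> y != x -> lt y x.
Proof.
move=> tr tot; elim=> [//|a s IH] _.
have [-> | /IH [x xs xmax]] := eqVneq s [::].
  by exists a => [|y]; rewrite ?mem_seq1 // => /eqP ->; rewrite eqxx.
have [xa | /tot /orP [ltxa | ltax]] := eqVneq x a.
- exists x => [|y]; first by rewrite inE xs orbT.
  by rewrite inE => /orP [/eqP -> | /xmax //]; rewrite xa eqxx.
- exists a => [|y]; first exact: mem_head.
  rewrite inE => /orP [/eqP -> | ys]; first by rewrite eqxx.
  by have [-> // | /(xmax _ ys) ltyx] := eqVneq y x; rewrite (tr _ _ _ ltyx ltxa).
- exists x => [|y]; first by rewrite inE xs orbT.
  by rewrite inE => /orP [/eqP -> | /xmax //].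
Qed.

Section Krylov.
Variables (K : fieldType) (m : nat) (A : 'M[K]_m) (v : 'cV[K]_m).

Lemma poly_mx_wide N (p : {poly K}) :
  (size p <= N)%N -> poly_mx A p = \sum_(i < N) p`_i *: A ^+ i.
Proof.
move=> le_pN; rewrite /poly_mx (big_ord_widen N (fun i => p`_i *: A ^+ i) le_pN).
rewrite big_mkcond /=; apply: eq_bigr => i _.
by case: ltnP => // le_p_i; rewrite nth_default // scale0r.
Qed.

Definition krylov_mx d : 'M[K]_(d, m) := \matrix_(i < d) (A ^+ i *m v)^T.

Lemma mul_krylov_mx d (c : 'rV[K]_d) :
  c *m krylov_mx d = (poly_mx A (rVpoly c) *m v)^T.
Proof.
rewrite mulmx_sum_row (poly_mx_wide (size_poly _ _)) mulmx_suml linear_sum /=.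
by apply: eq_bigr => i _; rewrite rowK coef_rVpoly_ord -scalemxAl linearZ.
Qed.

Lemma krylov_row_free (p : {poly K}) : p != 0 ->
  (forall q, poly_mx A q *m v = 0 -> p %| q) -> row_free (krylov_mx (size p).-1).
Proof.
move=> p_neq0 annihilated; apply: inj_row_free => c.
move/(congr1 trmx); rewrite mul_krylov_mx trmxK trmx0 => /annihilated p_dvd.
suff c0 : rVpoly c = 0 by rewrite -[c]rVpolyK c0 linear0.
apply/eqP; apply: contraT => c_neq0.
have := leq_trans (dvdp_leq c_neq0 p_dvd) (size_poly _ _).
by rewrite leqNgt ltn_predL size_poly_gt0 p_neq0.
Qed.

Lemma char_poly_seq_poly_mx (w : 'cV[K]_m) (q : {poly K}) :
  poly_mx A q *m v = 0 -> char_poly_seq (fun i => (w^T *m A ^+ i *m v) 0 0) q.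
Proof.
move=> qv i; have : w^T *m A ^+ i *m (poly_mx A q *m v) = 0 by rewrite qv mulmx0.
rewrite /poly_mx mulmx_suml mulmx_sumr => /(congr1 (fun M : 'M_1 => M 0 0)).
rewrite summxE mxE => sum_eq0; rewrite -[RHS]sum_eq0; apply: eq_bigr => k _.
by rewrite -scalemxAl -scalemxAr exprD -mulmxE !mulmxA [RHS]mxE.
Qed.

Lemma min_poly_vec_dvd (p : {poly K}) : p \is monic ->
  (forall q, poly_mx A q *m v = 0 <-> p %| q) -> min_poly_vec A v p.
Proof.
move=> monic_p annihilated; split=> //; first exact/annihilated/dvdpp.
by move=> q /monic_neq0 q_neq0 /annihilated; apply: dvdp_leq.
Qed.

End Krylov.

Lemma e1_col1 (K : fieldType) (m : nat) : e1 K m.+1 = col 0 1%:M.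
Proof. by apply/matrixP => i j; rewrite !mxE; case: i => [[|i] ?]. Qed.

Section CanonicalBasis.
Variables (K : fieldType) (n : nat) (I : {mpoly K[n]} -> Prop) (lt : rel 'X_{1..n}).
Hypotheses (idealI : is_ideal I) (ltT : term_order lt).

Lemma exists_lm (f : {mpoly K[n]}) : f != 0 -> exists m, is_lm lt f m.
Proof.
case: ltT => _ tr tot _ _; rewrite -msupp_eq0 => /(exists_lt_max tr tot) [m fm mmax].
by exists m.
Qed.

Lemma ideal1_of_nonstandard0 : ~ standard lt I 0%MM -> I 1.
Proof.
case: ltT => irr tr _ _ pos /NNPP [f [If f0 [f_0 fmax]]].
have fC : f = (f@_0%MM)%:MP.
  apply/mpolyP => m; rewrite mcoeffC.
  have [-> | m0] := eqVneq m 0%MM; first by rewrite mulr1.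
  rewrite mulr0; apply/eqP; rewrite mcoeff_eq0; apply/negP => fm.
  by have := tr _ _ _ (fmax _ fm m0) (pos _ m0); rewrite irr.
have -> : (1 : {mpoly K[n]}) = (f@_0%MM)^-1 *: f.
  by rewrite {2}fC -mul_mpolyC -rmorphM mulVf // -mcoeff_msupp.
exact: (idealZ idealI).
Qed.

Definition mpoly_of_coord (B : seq 'X_{1..n}) (v : 'cV[K]_(size B)) : {mpoly K[n]} :=
  \sum_(k < size B) v k 0 *: 'X_[nth 0%MM B k].
Arguments mpoly_of_coord : clear implicits.

Fact mpoly_of_coord_is_linear B : linear (mpoly_of_coord B).
Proof.
move=> a u v; rewrite /mpoly_of_coord scaler_sumr -big_split.
by apply: eq_bigr => k _; rewrite !mxE scalerDl scalerA.
Qed.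

HB.instance Definition _ (B : seq 'X_{1..n}) :=
  GRing.isLinear.Build K 'cV[K]_(size B) {mpoly K[n]} *:%R
    (mpoly_of_coord B) (@mpoly_of_coord_is_linear B).

Lemma mpoly_of_coord_col1 B (j : 'I_(size B)) :
  mpoly_of_coord B (col j 1%:M) = 'X_[nth 0%MM B j].
Proof.
rewrite /mpoly_of_coord (bigD1 j) //= !mxE eqxx scale1r big1 ?addr0 // => k kj.
by rewrite !mxE (negbTE kj) scale0r.
Qed.

Lemma mpoly_of_coord_ideal_eq0 B v :
  canonical_basis lt I B -> I (mpoly_of_coord B v) -> v = 0.
Proof.
case: (ltT) => irr tr _ _ _ [sortedB stdB] Iv.
have uniqB : uniq B := sorted_uniq tr irr sortedB.
have coefE m :
    (mpoly_of_coord B v)@_m = \sum_(k < size B) v k 0 * (nth 0%MM B k == m)%:R.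
  by rewrite /mpoly_of_coord raddf_sum; apply: eq_bigr => k _; rewrite /= mcoeffZ mcoeffX.
have v0 : mpoly_of_coord B v = 0.
  apply/eqP; apply: contraT => v_neq0; have [m [vm mmax]] := exists_lm v_neq0.
  have mB : m \in B.
    move: vm; rewrite mcoeff_msupp coefE; apply: contraLR => /negP mB; rewrite negbK.
    apply/eqP/big1 => k _; case: eqP => [Bk | _]; last by rewrite mulr0.
    by case: mB; rewrite -Bk mem_nth.
  by case: (proj1 (stdB m) mB); exists (mpoly_of_coord B v).
apply/matrixP => k j; rewrite (ord1 j) mxE.
have := congr1 (mcoeff (nth 0%MM B k)) v0.
rewrite coefE mcoeff0 (bigD1 k) //= eqxx mulr1 big1 ?addr0 // => i ik.
by rewrite nth_uniq // (inj_eq val_inj) (negbTE ik) mulr0.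
Qed.

Lemma ideal_one_sub_coord_e1 B :
  canonical_basis lt I B -> I (1 - mpoly_of_coord B (e1 K (size B))).
Proof.
case: (ltT) => irr tr _ _ pos [sortedB stdB].
(* Unless 1 lies in I, the least monomial 1 is standard and heads the sorted basis. *)
have [std0 | /ideal1_of_nonstandard0 I1] := classic (standard lt I 0%MM); last first.
  by rewrite -[_ - _]mulr1; apply: (idealMl idealI).
case: B sortedB stdB => [|b B] sortedB stdB; first by have := proj2 (stdB _) std0.
have b0 : b = 0%MM.
  apply/eqP; apply: contraT => b_neq0.
  have : 0%MM \in B by move: (proj2 (stdB _) std0); rewrite inE eq_sym (negbTE b_neq0).
  move/(allP (order_path_min tr sortedB)) => lt_b0.
  by have := tr _ _ _ lt_b0 (pos _ b_neq0); rewrite irr.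
by rewrite e1_col1 mpoly_of_coord_col1 /= b0 mpolyX0 subrr; apply: (ideal0 idealI).
Qed.

Section MultMatrix.
Variables (B : seq 'X_{1..n}) (g : {mpoly K[n]}) (T : 'M[K]_(size B)).
Hypotheses (basisB : canonical_basis lt I B) (multT : mult_matrix I B g T).
Local Notation e := (e1 K (size B)).

Lemma ideal_mul_coord_sub v :
  I (mpoly_of_coord B v * g - mpoly_of_coord B (T *m v)).
Proof.
have -> : T *m v = \sum_j v j 0 *: col j T.
  apply/matrixP => i k; rewrite (ord1 k) !mxE summxE.
  by apply: eq_bigr => j _; rewrite !mxE mulrC.
rewrite [X in _ - X]linear_sum {1}/mpoly_of_coord mulr_suml -sumrB.
apply: (ideal_sum idealI) => j _.
rewrite linearZ /= -scalerAl -scalerBr; apply: (idealZ idealI).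
suff -> : mpoly_of_coord B (col j T) = \sum_k T k j *: 'X_[nth 0%MM B k] by exact: multT.
by apply: eq_bigr => k _; rewrite mxE.
Qed.

Lemma ideal_pow_sub_coord i : I (g ^+ i - mpoly_of_coord B (T ^+ i *m e)).
Proof.
elim: i => [|i IH]; first by rewrite expr0 mul1mx; apply: ideal_one_sub_coord_e1.
have -> : T ^+ i.+1 *m e = T *m (T ^+ i *m e) by rewrite exprS -mulmxE mulmxA.
set v := T ^+ i *m e in IH *.
have -> : g ^+ i.+1 - mpoly_of_coord B (T *m v) = (g ^+ i - mpoly_of_coord B v) * g
    + (mpoly_of_coord B v * g - mpoly_of_coord B (T *m v)).
  by rewrite exprSr mulrBl addrA subrK.
by apply: (idealD idealI); [apply: (idealMr idealI) | apply: ideal_mul_coord_sub].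
Qed.

Lemma ideal_horner_sub_coord q :
  I (horner_alg g q - mpoly_of_coord B (poly_mx T q *m e)).
Proof.
rewrite horner_alg_coef /poly_mx mulmx_suml [X in _ - X]linear_sum -sumrB.
apply: (ideal_sum idealI) => i _.
by rewrite -scalemxAl linearZ -scalerBr; apply/(idealZ idealI)/ideal_pow_sub_coord.
Qed.

Lemma ideal_hornerP q : I (horner_alg g q) <-> poly_mx T q *m e = 0.
Proof.
have Iq := ideal_horner_sub_coord q; split => [Ih | qe0].
  apply: mpoly_of_coord_ideal_eq0 basisB _.
  by have := idealB idealI Ih Iq; rewrite opprB addrC subrK.
by rewrite qe0 linear0 subr0 in Iq.
Qed.

Lemma krylov_row_full d :
  (forall p, exists2 r : {poly K}, (size r <= d)%N & I (p - horner_alg g r)) ->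
  row_full (krylov_mx T e d).
Proof.
move=> reduce; rewrite -sub1mx; apply/row_subP => j.
have [r size_r Ir] := reduce 'X_[nth 0%MM B j].
have := idealD idealI Ir (ideal_horner_sub_coord r); rewrite addrA subrK.
rewrite -mpoly_of_coord_col1 -linearB => /(mpoly_of_coord_ideal_eq0 basisB) /eqP.
rewrite subr_eq0 => /eqP colE; apply/submxP; exists (poly_rV r).
by rewrite mul_krylov_mx poly_rV_K // -colE tr_col trmx1.
Qed.

End MultMatrix.

End CanonicalBasis.

Lemma ideal_gen_nth (K : fieldType) (n : nat) (G : seq {mpoly K[n]})
    (i : 'I_(size G)) :
  ideal_gen G G`_i.
Proof.
exists (fun j => (j == i)%:R); rewrite (bigD1 i) //= eqxx mul1r big1 ?addr0 //.
by move=> j /negbTE ->; rewrite mul0r.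
Qed.

Lemma shape_position_reduce (K : fieldType) (n : nat) (I : {mpoly K[n.+1]} -> Prop) :
  is_ideal I -> shape_position I ->
  forall p, exists q, I (p - horner_alg 'X_ord0 q).
Proof.
move=> idealI [f [genI _ _ _]].
pose reducible p := exists q, I (p - horner_alg ('X_ord0 : {mpoly K[n.+1]}) q).
have redD p1 p2 : reducible p1 -> reducible p2 -> reducible (p1 + p2).
  move=> [q1 I1] [q2 I2]; exists (q1 + q2).
  by rewrite rmorphD opprD addrACA; apply: idealD.
have redM p1 p2 : reducible p1 -> reducible p2 -> reducible (p1 * p2).
  move=> [q1 I1] [q2 I2]; exists (q1 * q2).
  rewrite rmorphM -[p1 * p2](subrK (horner_alg 'X_ord0 q1 * p2)).
  rewrite -mulrBl -addrA -mulrBr.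
  by apply: idealD => //; [apply: idealMr | apply: idealMl].
have redX i : reducible 'X_i.
  have [-> | i_neq0] := eqVneq i ord0.
    by exists 'X; rewrite horner_algX subrr; apply: ideal0.
  exists (f i); apply/genI.
  set G := map _ _; have iG : (i < size G)%N by rewrite size_map size_enum_ord.
  have := ideal_gen_nth (Ordinal iG).
  by rewrite (nth_map ord0) ?size_enum_ord //= nth_ord_enum (negbTE i_neq0) poly_x1E.
have red1 : reducible 1 by exists 1; rewrite rmorph1 subrr; apply: ideal0.
have redXm m : reducible 'X_[m].
  rewrite mpolyXE_id; apply: big_ind => // i _.
  by elim: (m i) => [|k IH]; [rewrite expr0 | rewrite exprS; apply: redM].
elim/mpolyind=> [|c m p _ _ red_p].
  by exists 0; rewrite rmorph0 subrr; apply: ideal0.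
apply: redD => //; have [q Iq] := redXm m.
by exists (c *: q); rewrite [X in _ - X]linearZ /= mulr_algl -scalerBr; apply: idealZ.
Qed.

Section IdealAdd1.
Variables (K : fieldType) (n : nat) (I : {mpoly K[n]} -> Prop).
Hypothesis idealI : is_ideal I.

Lemma is_ideal_add1 h : is_ideal (ideal_add1 I h).
Proof.
split.
- by exists 0, 0; rewrite mul0r addr0; split=> //; apply: ideal0.
- move=> _ _ [a [b [Ia ->]]] [a' [b' [Ia' ->]]]; exists (a + a'), (b + b').
  by rewrite mulrDl addrACA; split=> //; apply: idealD.
- move=> p _ [a [b [Ia ->]]]; exists (p * a), (p * b).
  by rewrite mulrDr mulrA; split=> //; apply: idealMl.
Qed.

Lemma ideal_add1_l h p : I p -> ideal_add1 I h p.
Proof. by move=> Ip; exists p, 0; rewrite mul0r addr0. Qed.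

Variables (g : {mpoly K[n]}) (f : {poly K}).
Hypothesis reduceI : forall p, exists q, I (p - horner_alg g q).
Hypothesis dvd_of_ideal : forall q, I (horner_alg g q) -> f %| q.
Local Notation J := (ideal_add1 I (horner_alg g f)).

Lemma ideal_add1_hornerP q : J (horner_alg g q) <-> f %| q.
Proof.
split=> [[a [b [Ia qE]]] | /dvdpP [r ->]]; last first.
  by exists 0, (horner_alg g r); rewrite add0r rmorphM; split=> //; apply: ideal0.
have [b' Ib'] := reduceI b.
suff /dvd_of_ideal : I (horner_alg g (q - b' * f)).
  by move/(dvdp_add (dvdp_mull b' (dvdpp f))); rewrite addrC subrK.
rewrite rmorphB rmorphM /= qE -addrA -mulrBl.
by apply: idealD => //; apply: idealMr.
Qed.

Lemma ideal_add1_reduce : f != 0 ->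
  forall p, exists2 r : {poly K}, (size r <= (size f).-1)%N & J (p - horner_alg g r).
Proof.
move=> f_neq0 p; have [q Iq] := reduceI p.
exists (q %% f); first by rewrite -ltnS prednK ?size_poly_gt0 // ltn_modp.
have -> : p - horner_alg g (q %% f) = (p - horner_alg g q) + horner_alg g (q %/ f * f).
  by rewrite {2}(divp_eq q f) rmorphD /= opprD addrA addrAC subrK.
apply: (idealD (is_ideal_add1 _)); first exact: ideal_add1_l.
by apply/ideal_add1_hornerP/dvdp_mull.
Qed.

End IdealAdd1.

Theorem lemma3p5 (K : fieldType) (n : nat)
    (I : {mpoly K[n.+1]} -> Prop) (lt1 : rel 'X_{1..n.+1})
    (B : seq 'X_{1..n.+1}) (T1 : 'M[K]_(size B)) (w : 'cV[K]_(size B))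
    (ft : {poly K})
    (B2 : seq 'X_{1..n.+1}) (T2 : 'M[K]_(size B2)) :
  is_ideal I ->
  term_order lt1 ->
  canonical_basis lt1 I B ->
  shape_position I ->
  mult_matrix I B 'X_ord0 T1 ->
  T1 \in unitmx ->
  min_poly_seq (fun i => (w^T *m (T1 ^+ i) *m e1 K (size B)) 0 0) ft ->
  canonical_basis lt1 (ideal_add1 I (poly_x1 n ft)) B2 ->
  mult_matrix (ideal_add1 I (poly_x1 n ft)) B2 'X_ord0 T2 ->
  size B2 = (size ft).-1 /\ min_poly_vec T2 (e1 K (size B2)) ft.
Proof.
move=> idealI lt1T basisB shapeI multT1 _ [monic_ft char_ft] basisB2 multT2.
rewrite poly_x1E in basisB2 multT2.
have ft_neq0 : ft != 0 := monic_neq0 monic_ft.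
have reduceI := shape_position_reduce idealI shapeI.
have dvd_of_ideal q : I (horner_alg 'X_ord0 q) -> ft %| q.
  by move/(ideal_hornerP idealI lt1T basisB multT1)/char_poly_seq_poly_mx/char_ft.
have idealJ := is_ideal_add1 idealI (horner_alg 'X_ord0 ft).
have annihilated q : poly_mx T2 q *m e1 K (size B2) = 0 <-> ft %| q.
  rewrite -(ideal_hornerP idealJ lt1T basisB2 multT2).
  exact: ideal_add1_hornerP.
split; last exact: min_poly_vec_dvd.
have free := krylov_row_free ft_neq0 (fun q => proj1 (annihilated q)).
have full := krylov_row_full idealJ lt1T basisB2 multT2
  (ideal_add1_reduce idealI reduceI dvd_of_ideal ft_neq0).
by rewrite -(eqP full) (eqP free).
Qed.
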